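(* Let $n\ge 2$ and let $F$ be the free loop on $n$ generators $x_1,\dots,x_n$. Then $\gamma_{n-1}\mathrm{LMlt}(F/F_3)$ is non-trivial.
   Context: A loop is a set with a product and two-sided identity in which all left and right multiplications are bijective; $\mathrm{LMlt}(L)$ is the group of permutations of $L$ generated by the left multiplications $L_a\colon x\mapsto ax$. For a group $G$, $\gamma_1G=G$ and $\gamma_{k+1}G=[G,\gamma_kG]$. For a loop $F$ and a normal subloop $N$, $[N,F]$ denotes the smallest subloop of $N$ which is normal in $F$ and such that $N/[N,F]$ is contained in the centre of $F/[N,F]$. Bruck's lower central series is $F_1=F$, $F_{k+1}=[F_k,F]$. *)

From mathcomp Require Import all_boot.
Set Implicit Arguments.
Unset Strict Implicit.
Unset Printing Implicit Defensive.

Record loop := Loop {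
  lcar :> Type;
  lmul : lcar -> lcar -> lcar;
  lone : lcar;
  lone_l : forall x, lmul lone x = x;
  lone_r : forall x, lmul x lone = x;
  lmul_bij_l : forall a, bijective (lmul a);
  lmul_bij_r : forall a, bijective (fun x => lmul x a)
}.

Section LoopDefs.
Variable L : loop.
Local Notation "x * y" := (lmul x y).
Local Notation "1" := (lone L).

Definition loop_hom (K : loop) (h : L -> K) : Prop :=
  forall a b, h (a * b) = lmul (h a) (h b).

Definition subloop (N : L -> Prop) : Prop :=
  [/\ N 1,
      (forall a b, N a -> N b -> N (a * b)),
      (forall a b x, N a -> N b -> a * x = b -> N x) &
      (forall a b y, N a -> N b -> y * a = b -> N y)].

(* normal subloop (Bruck): xN = Nx, (xN)y = x(Ny), x(yN) = (xy)N *)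
Definition normal_subloop (N : L -> Prop) : Prop :=
  subloop N /\
  forall x y z,
    [/\ (exists m, N m /\ z = x * m) <-> (exists m, N m /\ z = m * x),
        (exists m, N m /\ z = (x * m) * y) <-> (exists m, N m /\ z = x * (m * y)) &
        (exists m, N m /\ z = x * (y * m)) <-> (exists m, N m /\ z = (x * y) * m)].

Definition coset (M : L -> Prop) (x : L) : L -> Prop :=
  fun y => exists m, M m /\ y = m * x.

Definition eqmod (M : L -> Prop) (x y : L) : Prop := coset M x = coset M y.

(* N/M is contained in the centre Z(L/M): every class aM with a in N
   commutes and associates with all classes of L/M *)
Definition central_mod (M N : L -> Prop) : Prop :=
  forall a x y, N a ->
    [/\ eqmod M (a * x) (x * a),
        eqmod M ((a * x) * y) (a * (x * y)),
        eqmod M ((x * a) * y) (x * (a * y)) &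
        eqmod M ((x * y) * a) (x * (y * a))].

(* [N, L]: the smallest subloop of N, normal in L, with N/[N,L] central
   in L/[N,L] (the intersection of all such) *)
Definition loop_comm (N : L -> Prop) : L -> Prop :=
  fun z => forall M, normal_subloop M -> (forall y, M y -> N y) ->
                     central_mod M N -> M z.

Fixpoint bruck (k : nat) : L -> Prop :=
  match k with
  | 0 | 1 => fun _ => True
  | S k' => loop_comm (bruck k')
  end.

Definition quot (M : L -> Prop) : Type := {P : L -> Prop | exists x, P = coset M x}.
Definition qproj (M : L -> Prop) (x : L) : quot M :=
  exist _ (coset M x) (ex_intro _ x erefl).

Definition quot_lmult (M : L -> Prop) : (quot M -> quot M) -> Prop :=
  fun f => exists a, forall x, f (qproj M x) = qproj M (a * x).

End LoopDefs.

Section PermGroups.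
Variable X : Type.

Inductive gen (A : (X -> X) -> Prop) : (X -> X) -> Prop :=
| gen_base f : A f -> gen A f
| gen_id : gen A id
| gen_comp f g : gen A f -> gen A g -> gen A (f \o g)
| gen_inv f g : gen A f -> cancel f g -> cancel g f -> gen A g.

Definition commset (G H : (X -> X) -> Prop) : (X -> X) -> Prop :=
  fun c => exists g h gi hi, G g /\ H h /\ cancel g gi /\ cancel gi g /\
                                  cancel h hi /\ cancel hi h /\
                                  c = gi \o hi \o g \o h.

Fixpoint gamma (G : (X -> X) -> Prop) (k : nat) : (X -> X) -> Prop :=
  match k with
  | 0 | 1 => G
  | S k' => gen (commset G (gamma G k'))
  end.

End PermGroups.

Definition LMlt_quot (L : loop) (M : L -> Prop) : (@quot L M -> @quot L M) -> Prop :=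
  gen (@quot_lmult L M).

Definition free_loop_on (n : nat) (F : loop) (x : 'I_n -> F) : Prop :=
  forall (L : loop) (f : 'I_n -> L),
    exists h : F -> L, [/\ loop_hom h, (forall i, h (x i) = f i) &
      forall h' : F -> L, loop_hom h' -> (forall i, h' (x i) = f i) -> h' = h].

(* Write n = m + 2.  The free loop maps onto the loop Q on GF(2)^(N) x GF(2) with
   (a, z)(b, w) = (a + b, z + w + a_0 b_1 ... b_(m+1)), sending x_i to (e_i, 0).
   Modulo its central subgroup 0 x GF(2), Q is an elementary abelian 2-group,
   so the image of F_2 is central in Q and F_3 lies in the kernel: the map
   factors through F/F_3 and intertwines left multiplications.  In Q the
   iterated commutator [L_(e_m), [..., [L_(e_1), L_(e_0)]...]] adds b_(m+1) to
   the last coordinate of (b, w), so it moves (e_(m+1), 0); hence the same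
   iterated commutator of left multiplications of F/F_3, which lies in
   gamma_(m+1) = gamma_(n-1), moves the class of x_(m+1). *)

From mathcomp Require Import all_boot.
From Stdlib Require Import FunctionalExtensionality PropExtensionality.
From Stdlib Require Import ProofIrrelevance IndefiniteDescription.
Set Implicit Arguments.
Unset Strict Implicit.
Unset Printing Implicit Defensive.

Section LoopBasics.
Variable L : loop.
Local Notation "x * y" := (lmul x y).
Local Notation "1" := (lone L).

Lemma mulIl (a : L) : injective (lmul a).
Proof. exact: bij_inj (lmul_bij_l a). Qed.

Lemma mulIr (a : L) : injective (fun x => x * a).
Proof. exact: bij_inj (lmul_bij_r a). Qed.

Lemma bij_surj (u : L -> L) : bijective u -> forall z, exists y, u y = z.
Proof. by case=> g _ ug z; exists (g z). Qed.

Definition ldiv (a z : L) : L :=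
  proj1_sig (constructive_indefinite_description _ (bij_surj (lmul_bij_l a) z)).

Lemma mul_ldiv a z : a * ldiv a z = z.
Proof. by rewrite /ldiv; case: constructive_indefinite_description. Qed.

Lemma bij_mulAl (x y : L) : bijective (fun m => (x * m) * y).
Proof. exact: bij_comp (lmul_bij_r y) (lmul_bij_l x). Qed.

Lemma bij_mulAr (x y : L) : bijective (fun m => x * (m * y)).
Proof. exact: bij_comp (lmul_bij_l x) (lmul_bij_r y). Qed.

Lemma bij_mul2 (x y : L) : bijective (fun m => x * (y * m)).
Proof. exact: bij_comp (lmul_bij_l x) (lmul_bij_l y). Qed.

Definition central (c : L) : Prop := forall x y,
  [/\ c * x = x * c, (c * x) * y = c * (x * y),
      (x * c) * y = x * (c * y) & (x * y) * c = x * (y * c)].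

End LoopBasics.

Section LoopTheory.
Variable L : loop.
Local Notation "x * y" := (lmul x y).
Local Notation "1" := (lone L).

Section Normal.
Variable N : L -> Prop.
Hypothesis normN : normal_subloop N.

Lemma normal1 : N 1.
Proof. by case: normN => -[]. Qed.

Lemma normalM a b : N a -> N b -> N (a * b).
Proof. by case: normN => -[] _ + _ _ _; apply. Qed.

Lemma normal_ldiv a b y : N a -> N b -> a * y = b -> N y.
Proof. by case: normN => -[] _ _ + _ _; apply. Qed.

Lemma normal_mulNC n x : N n -> exists2 n', N n' & n * x = x * n'.
Proof.
move=> Nn; case: normN => _ /(_ x x (n * x)) [/proj2 nP _ _].
by case: nP => [|n' [Nn' ->]]; [exists n | exists n'].
Qed.

Lemma normal_mulCN n x : N n -> exists2 n', N n' & x * n = n' * x.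
Proof.
move=> Nn; case: normN => _ /(_ x x (x * n)) [/proj1 nP _ _].
by case: nP => [|n' [Nn' ->]]; [exists n | exists n'].
Qed.

Lemma normal_mulANl n x y : N n -> exists2 n', N n' & (x * n) * y = x * (n' * y).
Proof.
move=> Nn; case: normN => _ /(_ x y ((x * n) * y)) [_ /proj1 nP _].
by case: nP => [|n' [Nn' ->]]; [exists n | exists n'].
Qed.

Lemma normal_mulAN n x y : N n -> exists2 n', N n' & x * (y * n) = (x * y) * n'.
Proof.
move=> Nn; case: normN => _ /(_ x y (x * (y * n))) [_ _ /proj1 nP].
by case: nP => [|n' [Nn' ->]]; [exists n | exists n'].
Qed.

Lemma normal_mulNA n x y : N n -> exists2 n', N n' & (x * y) * n = x * (y * n').
Proof.
move=> Nn; case: normN => _ /(_ x y ((x * y) * n)) [_ _ /proj2 nP].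
by case: nP => [|n' [Nn' ->]]; [exists n | exists n'].
Qed.

Lemma coset_mulN n v z : N n -> coset N (n * v) z -> coset N v z.
Proof.
move=> Nn [m [Nm ->]].
have [n1 Nn1 ->] := normal_mulNC v Nn.
have [n2 Nn2 ->] := normal_mulAN m v Nn1.
have [n3 Nn3 ->] := normal_mulNC v Nm.
have [n4 Nn4 ->] := normal_mulANl v n2 Nn3.
have [n5 Nn5 ->] := normal_mulCN v (normalM Nn4 Nn2).
by exists n5.
Qed.

Lemma normal_cancelN n v : N n -> exists2 n', N n' & v = n' * (n * v).
Proof.
move=> Nn; have [n1 Nn1 ->] := normal_mulNC v Nn.
have [m1 Em1] := bij_surj (lmul_bij_l n1) 1.
have Nm1 : N m1 := normal_ldiv Nn1 normal1 Em1.
have [k Nk Ek] := normal_mulAN v n1 Nm1.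
rewrite Em1 lone_r in Ek.
have [k' Nk' Ek'] := normal_mulCN (v * n1) Nk.
by exists k'; last rewrite -Ek'.
Qed.

Lemma eqmodP u v : eqmod N u v <-> exists2 n, N n & u = n * v.
Proof.
split=> [E | [n Nn ->]].
  have : coset N u u by exists 1; rewrite lone_l; split=> //; exact: normal1.
  by rewrite E => -[n [Nn ->]]; exists n.
apply: functional_extensionality => z; apply: propositional_extensionality.
split; first exact: coset_mulN.
case=> m [Nm ->]; have [n' Nn' Ev] := normal_cancelN v Nn.
by apply: (coset_mulN Nn'); exists m; rewrite -Ev.
Qed.

Lemma eqmod_mulNl a x : N a -> eqmod N (a * x) x.
Proof. by move=> Na; apply/eqmodP; exists a. Qed.

Lemma eqmod_mulNr a x : N a -> eqmod N (x * a) x.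
Proof. by move=> Na; apply/eqmodP; apply: normal_mulCN. Qed.

Lemma eqmod_mull a x y : eqmod N x y -> eqmod N (a * x) (a * y).
Proof.
case/eqmodP=> n Nn ->; apply/eqmodP.
have [n1 Nn1 ->] := normal_mulNC y Nn.
have [n2 Nn2 ->] := normal_mulAN a y Nn1.
exact: normal_mulCN.
Qed.

Lemma eqmod_mulr a x y : eqmod N x y -> eqmod N (x * a) (y * a).
Proof.
case/eqmodP=> n Nn ->; apply/eqmodP.
have [n1 Nn1 ->] := normal_mulNC y Nn.
have [n2 Nn2 ->] := normal_mulANl y a Nn1.
have [n3 Nn3 ->] := normal_mulNC a Nn2.
have [n4 Nn4 ->] := normal_mulAN y a Nn3.
exact: normal_mulCN.
Qed.

Lemma eqmod_mulIl a x y : eqmod N (a * x) (a * y) -> eqmod N x y.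
Proof.
case/eqmodP=> n Nn E; apply/eqmodP; move: E.
have [n1 Nn1 ->] := normal_mulNC (a * y) Nn.
have [n2 Nn2 ->] := normal_mulNA a y Nn1.
move/mulIl=> ->; exact: normal_mulCN.
Qed.

Lemma central_mod_self : central_mod N N.
Proof.
move=> a x y Na; split; rewrite /eqmod.
- by rewrite (eqmod_mulNl x Na) (eqmod_mulNr x Na).
- by rewrite (eqmod_mulr y (eqmod_mulNl x Na)) (eqmod_mulNl (x * y) Na).
- by rewrite (eqmod_mulr y (eqmod_mulNr x Na)) (eqmod_mull x (eqmod_mulNl y Na)).
- by rewrite (eqmod_mulNr (x * y) Na) (eqmod_mull x (eqmod_mulNr y Na)).
Qed.

End Normal.

Definition bigcap (P : (L -> Prop) -> Prop) : L -> Prop :=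
  fun z => forall N, P N -> N z.

Lemma bigcap_image P (u v : L -> L) z : bijective v ->
    (forall N, P N -> (exists m, N m /\ z = u m) -> exists m, N m /\ z = v m) ->
  (exists m, bigcap P m /\ z = u m) -> exists m, bigcap P m /\ z = v m.
Proof.
move=> bv uv [m [Pm Ez]]; have [m0 Em0] := bij_surj bv z.
exists m0; split=> [N PN|]; last by rewrite Em0.
have [|m' [Nm' E]] := uv N PN; first by exists m; split=> //; apply: Pm.
by rewrite -Em0 in E; rewrite (bij_inj bv E).
Qed.

Lemma bigcap_image_eq P (u v : L -> L) z : bijective u -> bijective v ->
    (forall N, P N -> (exists m, N m /\ z = u m) <-> (exists m, N m /\ z = v m)) ->
  (exists m, bigcap P m /\ z = u m) <-> (exists m, bigcap P m /\ z = v m).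
Proof. by move=> bu bv uv; split; apply: bigcap_image => // N /uv[]. Qed.

Lemma normal_bigcap P : (forall N, P N -> normal_subloop N) -> normal_subloop (bigcap P).
Proof.
move=> normP; split.
  split=> [N /normP/normal1 // | a b Pa Pb N PN | a b y Pa Pb E N PN | a b y Pa Pb E N PN].
  - by apply: (normalM (normP N PN)); [apply: Pa | apply: Pb].
  - by case: (normP N PN) => -[] _ _ + _ _; apply; [apply: Pa | apply: Pb | ].
  - by case: (normP N PN) => -[] _ _ _ + _; apply; [apply: Pa | apply: Pb | ].
move=> x y z; have nP N (PN : P N) := proj2 (normP N PN) x y z.
split; apply: bigcap_image_eq => [||N /nP[] //];
  by [apply: lmul_bij_l | apply: lmul_bij_r | apply: bij_mulAl | apply: bij_mulAr
      | apply: bij_mul2].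
Qed.

Lemma normal_setT : normal_subloop (fun _ : L => True).
Proof.
have onto (u : L -> L) z : bijective u -> exists m, True /\ z = u m.
  by move=> bu; have [m <-] := bij_surj bu z; exists m.
split; first by split.
move=> x y z; split; split=> _; apply: onto;
  by [apply: lmul_bij_l | apply: lmul_bij_r | apply: bij_mulAl | apply: bij_mulAr
      | apply: bij_mul2].
Qed.

Lemma normal_loop_comm (N : L -> Prop) : normal_subloop (loop_comm N).
Proof.
have -> : loop_comm N =
    bigcap (fun M => [/\ normal_subloop M, (forall y, M y -> N y) & central_mod M N]).
  apply: functional_extensionality => z; apply: propositional_extensionality.
  by split=> [Nz M [] | Nz M nM MN cM]; [apply: Nz | apply: Nz].
by apply: normal_bigcap => M [].
Qed.

Lemma normal_bruck k : normal_subloop (@bruck L k).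
Proof. by case: k => [|[|k]]; [exact: normal_setT | exact: normal_setT | exact: normal_loop_comm].
Qed.

Lemma eqmod_bigcap P (u v : L) : (forall N, P N -> normal_subloop N) ->
  (forall N, P N -> eqmod N u v) -> eqmod (bigcap P) u v.
Proof.
move=> normP Puv; apply/(eqmodP (normal_bigcap normP)).
have [n0 En0] := bij_surj (lmul_bij_r v) u.
exists n0 => [N PN|]; last by rewrite -En0.
have /(eqmodP (normP N PN)) [n Nn E] := Puv N PN.
by rewrite -En0 in E; rewrite (mulIr E).
Qed.

Lemma central_mod_bigcap P (A : L -> Prop) : (forall N, P N -> normal_subloop N) ->
  (forall N, P N -> central_mod N A) -> central_mod (bigcap P) A.
Proof.
move=> normP cP a x y Aa.
by split; apply: eqmod_bigcap => // N /cP/(_ a x y Aa)[].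
Qed.

Section Kernel.
Variables (K : loop) (h : L -> K).
Hypothesis hom_h : loop_hom h.

Definition ker : L -> Prop := fun z => h z = lone K.

Lemma hom1 : h 1 = lone K.
Proof. by apply: (@mulIr K (h 1)); rewrite /= -hom_h !lone_l. Qed.

Lemma ker_image_eq (u v : L -> L) (U V : K -> K) z :
    bijective u -> bijective v -> bijective U -> bijective V ->
    (forall m, h (u m) = U (h m)) -> (forall m, h (v m) = V (h m)) ->
    U (lone K) = V (lone K) ->
  (exists m, ker m /\ z = u m) <-> (exists m, ker m /\ z = v m).
Proof.
have image (w : L -> L) (W : K -> K) : bijective w -> bijective W ->
    (forall m, h (w m) = W (h m)) -> (exists m, ker m /\ z = w m) <-> h z = W (lone K).
  move=> bw /bij_inj iW hw; split=> [[m [km ->]] | E]; first by rewrite hw km.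
  have [m Em] := bij_surj bw z; exists m; split; last by rewrite Em.
  by apply: iW; rewrite -hw Em.
move=> bu bv bU bV hu hv UV.
by split=> [/(image u U bu bU hu) E | /(image v V bv bV hv) E];
  [apply/(image v V bv bV hv); rewrite E | apply/(image u U bu bU hu); rewrite E].
Qed.

Lemma normal_ker : normal_subloop ker.
Proof.
split.
  split=> [|a b ka kb|a b y ka kb E|a b y ka kb E]; rewrite /ker.
  - exact: hom1.
  - by rewrite hom_h ka kb lone_l.
  - by apply: (@mulIl K (h a)); rewrite -hom_h E ka kb lone_r.
  - by apply: (@mulIr K (h a)); rewrite /= -hom_h E ka kb lone_l.
move=> x y z; split;
  [apply: (ker_image_eq (U := lmul (h x)) (V := fun c => lmul c (h x)))
  |apply: (ker_image_eq (U := fun c => lmul (lmul (h x) c) (h y))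
                        (V := fun c => lmul (h x) (lmul c (h y))))
  |apply: (ker_image_eq (U := fun c => lmul (h x) (lmul (h y) c))
                        (V := lmul (lmul (h x) (h y))))];
  by [ move=> m; rewrite !hom_h | rewrite ?lone_l ?lone_r | apply: lmul_bij_l
     | apply: lmul_bij_r | apply: bij_mulAl | apply: bij_mulAr | apply: bij_mul2].
Qed.

Lemma eqmod_ker u v : h u = h v -> eqmod ker u v.
Proof.
move=> E; apply/(eqmodP normal_ker).
have [n En] := bij_surj (lmul_bij_r v) u; exists n; last by rewrite -En.
by apply: (@mulIr K (h v)); rewrite /= -hom_h En E lone_l.
Qed.

Lemma central_mod_ker (A : L -> Prop) : (forall a, A a -> central (h a)) -> central_mod ker A.
Proof.
move=> cA a x y /cA/(_ (h x) (h y)) cax.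
by split; apply: eqmod_ker; rewrite !hom_h; case: cax.
Qed.

Lemma bruck_sub_ker k : (forall a, @bruck L k.+1 a -> central (h a)) ->
  forall z, @bruck L k.+2 z -> ker z.
Proof.
(* [ker h] meets [L_(k+1)] in one of the subloops whose intersection is [L_(k+2)]. *)
move=> cF z Fz.
pose P N := N = ker \/ N = @bruck L k.+1.
have normP N : P N -> normal_subloop N by case=> ->; [exact: normal_ker | exact: normal_bruck].
suff /(_ ker (or_introl erefl)) : bigcap P z by [].
apply: Fz => [|y /(_ _ (or_intror erefl)) //|]; first exact: normal_bigcap.
apply: central_mod_bigcap => // N [] ->; first exact: central_mod_ker.
exact: central_mod_self (normal_bruck k.+1).
Qed.

End Kernel.

Section Quotient.
Variable N : L -> Prop.
Hypothesis normN : normal_subloop N.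

Lemma qproj_eqmod x y : eqmod N x y -> qproj N x = qproj N y.
Proof. exact: subset_eq_compat. Qed.

Definition qrep (P : quot N) : L :=
  proj1_sig (constructive_indefinite_description _ (proj2_sig P)).

Lemma qrepK P : qproj N (qrep P) = P.
Proof.
case: P => S PS; rewrite /qrep /=.
by case: constructive_indefinite_description => x /= Sx; apply: subset_eq_compat.
Qed.

Lemma eqmod_qrep x : eqmod N (qrep (qproj N x)) x.
Proof. by have /(congr1 sval) := qrepK (qproj N x). Qed.

Definition qlmul (a : L) (P : quot N) := qproj N (a * qrep P).
Definition qldiv (a : L) (P : quot N) := qproj N (ldiv a (qrep P)).

Lemma qlmul_proj a x : qlmul a (qproj N x) = qproj N (a * x).
Proof. by apply/qproj_eqmod/eqmod_mull/eqmod_qrep. Qed.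

Lemma quot_lmult_qlmul (a : L) : quot_lmult (qlmul a).
Proof. by exists a => x; rewrite qlmul_proj. Qed.

Lemma qlmulK a : cancel (qlmul a) (qldiv a).
Proof.
move=> P; rewrite -[in RHS](qrepK P); apply: qproj_eqmod.
by apply: (eqmod_mulIl normN (a := a)); rewrite mul_ldiv; apply: eqmod_qrep.
Qed.

Lemma qldivK a : cancel (qldiv a) (qlmul a).
Proof. by move=> P; rewrite /qldiv qlmul_proj mul_ldiv qrepK. Qed.

Section Lift.
Variables (K : loop) (h : L -> K).
Hypotheses (hom_h : loop_hom h) (N_ker : forall z, N z -> ker h z).

Definition qlift (P : quot N) : K := h (qrep P).

Lemma qlift_proj x : qlift (qproj N x) = h x.
Proof.
rewrite /qlift; have /(eqmodP normN) [n Nn ->] := eqmod_qrep x.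
by rewrite hom_h (N_ker Nn) lone_l.
Qed.

Lemma qlift_qlmul a P : qlift (qlmul a P) = lmul (h a) (qlift P).
Proof. by rewrite /qlmul qlift_proj hom_h. Qed.

End Lift.
End Quotient.
End LoopTheory.

Section IteratedCommutators.
Variable X : Type.
Implicit Types l li : nat -> X -> X.

Fixpoint itercomm l li k : (X -> X) * (X -> X) :=
  if k is k'.+1 then
    let c := itercomm l li k' in (li k \o c.2 \o l k \o c.1, c.2 \o li k \o c.1 \o l k)
  else (l 0, li 0).

Lemma itercommK l li : (forall j, cancel (l j) (li j)) -> (forall j, cancel (li j) (l j)) ->
  forall k, cancel (itercomm l li k).1 (itercomm l li k).2 /\
            cancel (itercomm l li k).2 (itercomm l li k).1.
Proof.
move=> lK liK; elim=> [|k [cK ciK]] //=.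
by split=> y /=; rewrite ?(lK, liK, cK, ciK).
Qed.

Lemma itercomm_gamma (G : (X -> X) -> Prop) l li : (forall j, G (l j)) ->
    (forall j, cancel (l j) (li j)) -> (forall j, cancel (li j) (l j)) ->
  forall k, gamma G k.+1 (itercomm l li k).1.
Proof.
move=> Gl lK liK; elim=> [|k IH] //=; apply: gen_base.
have [cK ciK] := itercommK lK liK k.
by exists (l k.+1), (itercomm l li k).1, (li k.+1), (itercomm l li k).2.
Qed.

End IteratedCommutators.

Lemma itercomm_semiconj (X Y : Type) (H : X -> Y) (l li : nat -> X -> X)
    (l' li' : nat -> Y -> Y) k :
    (forall j, cancel (li j) (l j)) -> (forall j, cancel (l' j) (li' j)) ->
    (forall j, j <= k -> forall P, H (l j P) = l' j (H P)) ->
  forall P, H ((itercomm l li k).1 P) = (itercomm l' li' k).1 (H P) /\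
            H ((itercomm l li k).2 P) = (itercomm l' li' k).2 (H P).
Proof.
move=> liK l'K Hl.
have Hli j : j <= k -> forall P, H (li j P) = li' j (H P).
  by move=> jk P; rewrite -{2}(liK j P) Hl // l'K.
elim: k Hl Hli => [|k IH] Hl Hli P /=; first by rewrite Hl ?Hli.
have {}IH := IH (fun j jk => Hl j (leqW jk)) (fun j jk => Hli j (leqW jk)).
by rewrite Hli // (IH _).2 Hl // (IH _).1 (IH _).2 Hli // (IH _).1 Hl.
Qed.

Definition vec := nat -> bool.
Definition addv (a b : vec) : vec := fun i => a i (+) b i.
Definition zerov : vec := fun _ => false.
Definition basisv (j : nat) : vec := fun i => i == j.

Lemma addvA : associative addv.
Proof. by move=> a b c; apply: functional_extensionality => i; rewrite /addv addbA. Qed.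

Lemma addvC : commutative addv.
Proof. by move=> a b; apply: functional_extensionality => i; rewrite /addv addbC. Qed.

Lemma add0v : left_id zerov addv.
Proof. by []. Qed.

Lemma addv0 : right_id zerov addv.
Proof. by move=> a; apply: functional_extensionality => i; rewrite /addv addbF. Qed.

Lemma addvv : self_inverse zerov addv.
Proof. by move=> a; apply: functional_extensionality => i; rewrite /addv addbb. Qed.

Lemma addKv : left_loop id addv.
Proof. by move=> a b; rewrite addvA addvv. Qed.

Lemma addvK : right_loop id addv.
Proof. by move=> a b; rewrite -addvA addvv addv0. Qed.

Definition vec_loop : loop :=
  Loop add0v addv0 (fun a => Bijective (addKv a) (addKv a))
       (fun a => Bijective (addvK a) (addvK a)).

Lemma vec_central (a : vec_loop) : central a.
Proof. by move=> b c; split; rewrite /= ?addvA // addvC. Qed.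

Section CentralExtension.
Variable f : vec -> vec -> bool.
Hypotheses (f0v : forall b, f zerov b = false) (fv0 : forall a, f a zerov = false).

Definition emul (p q : vec * bool) : vec * bool :=
  (addv p.1 q.1, p.2 (+) q.2 (+) f p.1 q.1).
Definition eldiv (p q : vec * bool) : vec * bool :=
  (addv p.1 q.1, p.2 (+) q.2 (+) f p.1 (addv p.1 q.1)).
Definition erdiv (p q : vec * bool) : vec * bool :=
  (addv q.1 p.1, p.2 (+) q.2 (+) f (addv q.1 p.1) p.1).

Lemma emul1 : left_id (zerov, false) emul.
Proof. by case=> b w; rewrite /emul /= f0v addbF. Qed.

Lemma emulr1 : right_id (zerov, false) emul.
Proof. by case=> a z; rewrite /emul /= fv0 addv0 !addbF. Qed.

Lemma emulK p : cancel (emul p) (eldiv p).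
Proof.
by case: p => a z [b w]; rewrite /emul /eldiv /= addKv; congr pair; case: z; case: w; case: (f _ _).
Qed.

Lemma eldivK p : cancel (eldiv p) (emul p).
Proof.
by case: p => a z [b w]; rewrite /emul /eldiv /= addKv; congr pair; case: z; case: w; case: (f _ _).
Qed.

Lemma emulKr p : cancel (emul^~ p) (erdiv p).
Proof.
by case: p => b w [a z]; rewrite /emul /erdiv /= addvK; congr pair; case: z; case: w; case: (f _ _).
Qed.

Lemma erdivK p : cancel (erdiv p) (emul^~ p).
Proof.
by case: p => b w [a z]; rewrite /emul /erdiv /= addvK; congr pair; case: z; case: w; case: (f _ _).
Qed.

Definition ext_loop : loop :=
  Loop emul1 emulr1 (fun p => Bijective (emulK p) (eldivK p))
       (fun p => Bijective (emulKr p) (erdivK p)).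

Lemma ext_central (p : ext_loop) : p.1 = zerov -> central p.
Proof.
case: p => _ z /= -> [b w] [c u]; rewrite /= /emul /= !f0v !fv0.
by split; congr pair; rewrite ?add0v ?addv0 ?addvA //; case: z; case: w; case: u; case: (f b c).
Qed.

End CentralExtension.

Definition qcocycle (m : nat) (a b : vec) : bool := a 0 && all b (iota 1 m.+1).

Lemma qcocycle0v m b : qcocycle m zerov b = false.
Proof. by []. Qed.

Lemma qcocyclev0 m a : qcocycle m a zerov = false.
Proof. by rewrite /qcocycle /= andbF. Qed.

Definition Q (m : nat) : loop := ext_loop (qcocycle0v m) (qcocyclev0 m).

Section CommutatorsInQ.
Variable m : nat.

Definition lQ j : Q m -> Q m := emul (qcocycle m) (basisv j, false).
Definition liQ j : Q m -> Q m := eldiv (qcocycle m) (basisv j, false).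

Definition tailv k (b : vec) : bool := all b (iota k.+1 (m.+1 - k)).
Definition shiftv k : vec := if k is 0 then basisv 0 else zerov.

Lemma lQS j b w : lQ j.+1 (b, w) = (addv (basisv j.+1) b, w).
Proof. by rewrite /lQ /emul /= /qcocycle /= addbF. Qed.

Lemma liQS j b w : liQ j.+1 (b, w) = (addv (basisv j.+1) b, w).
Proof. by rewrite /liQ /eldiv /= /qcocycle /= addbF. Qed.

Lemma tailvS k b : k < m -> tailv k b (+) tailv k (addv (basisv k.+1) b) = tailv k.+1 b.
Proof.
move=> km; rewrite /tailv subSS (subSn (ltnW km)) /= /addv /basisv eqxx.
have -> : all (fun i => (i == k.+1) (+) b i) (iota k.+2 (m - k)) = all b (iota k.+2 (m - k)).
  apply: eq_in_all => i; rewrite mem_iota => /andP [ki _].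
  by rewrite (gtn_eqF ki).
by case: (b k.+1); case: (all b _).
Qed.

Lemma itercommQ k : k <= m -> forall b w,
  (itercomm lQ liQ k).1 (b, w) = (addv b (shiftv k), w (+) tailv k b) /\
  (itercomm lQ liQ k).2 (b, w) = (addv b (shiftv k), w (+) tailv k (addv b (shiftv k))).
Proof.
elim: k => [|k IH] km b w /=.
  by rewrite /lQ /liQ /emul /eldiv /= /qcocycle /tailv /= addvC.
have {}IH := IH (ltnW km).
rewrite (IH _ _).1 lQS (IH _ _).2 liQS lQS (IH _ _).1 liQS (IH _ _).2 /= !addv0.
have -> : addv (addv (basisv k.+1) (addv b (shiftv k))) (shiftv k) = addv (basisv k.+1) b.
  by rewrite addvA addvK.
have -> : addv (addv (basisv k.+1) (addv (addv (basisv k.+1) b) (shiftv k))) (shiftv k) = b.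
  by rewrite addvA addvK addKv.
by rewrite addKv -!addbA tailvS // [tailv k (addv _ _) (+) _]addbC tailvS.
Qed.

Lemma itercommQ_snd b w : ((itercomm lQ liQ m).1 (b, w)).2 = w (+) b m.+1.
Proof. by rewrite (itercommQ (leqnn m) b w).1 /tailv subSnn /= andbT. Qed.

End CommutatorsInQ.

Theorem lemma4p2 (n : nat) (Hn : 2 <= n) (F : loop) (x : 'I_n -> F)
  (Hfree : free_loop_on x) :
  exists g, gamma (@LMlt_quot F (@bruck F 3)) (n - 1) g /\ exists q, g q <> q.
Proof.
case: n Hn x Hfree => [|[|m]] // _ x Hfree.
have [h [hom_h hx _]] := Hfree (Q m) (fun i => (basisv i, false)).
have hxj j : j <= m.+1 -> h (x (inord j)) = (basisv j, false) by move=> jm; rewrite hx inordK.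
have F3_ker : forall z, @bruck F 3 z -> ker h z.
  apply: (bruck_sub_ker hom_h (k := 1)) => a F2a; apply: ext_central.
  have hom_fst_h : @loop_hom F vec_loop (fun z => (h z).1) by move=> b c; rewrite hom_h.
  exact: (bruck_sub_ker hom_fst_h (k := 0) (fun b _ => vec_central _) F2a).
pose N3 := @bruck F 3; have normN3 : normal_subloop N3 := normal_bruck F 3.
pose l j : quot N3 -> quot N3 := qlmul (x (inord j)).
pose li j : quot N3 -> quot N3 := qldiv (x (inord j)).
exists (itercomm l li m).1; split.
  rewrite subSS subn0; apply: itercomm_gamma => j.
  - exact/gen_base/quot_lmult_qlmul.
  - exact: qlmulK.
  - exact: qldivK.
have qlift_l j : j <= m -> forall P, qlift h (l j P) = lQ j (qlift h P).
  by move=> jm P; rewrite /l qlift_qlmul // hxj; [reflexivity | exact: ltnW].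
exists (qproj N3 (x (inord m.+1))) => /(congr1 (qlift h)).
have [-> _] := itercomm_semiconj (fun j => qldivK normN3 _) (fun j => emulK _ _)
  qlift_l (qproj N3 (x (inord m.+1))).
by rewrite qlift_proj // hxj // => /(congr1 snd); rewrite itercommQ_snd /basisv /= eqxx.
Qed.
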